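(* Let $(\Lambda_i,W_i,\mathscr{M}_i)$, $i=1,2$, be flag order data over a field $\mathbb{K}$, let $\Lambda=\Lambda_1\otimes_{\mathbb{K}}\Lambda_2$ and $\hat W=(W_1\times W_2)\ltimes(\mathscr{M}_1\times\mathscr{M}_2)=\hat W_1\times\hat W_2$ acting factorwise on $\Lambda$. For pairwise distinct $\sigma_1,\dots,\sigma_n\in\hat W$, there exist $a_1,\dots,a_n\in\Lambda$ with $\det\big((\sigma_i(a_j))_{i,j=1}^n\big)\neq0$ such that each $a_j$ is a simple tensor $a_j=b_j\otimes c_j$ with $b_j\in\Lambda_1$, $c_j\in\Lambda_2$.
   Context: Flag order data $(\Lambda,W,\mathscr{M})$: $\Lambda$ a Noetherian integrally closed domain, $W$ a finite subgroup of $\mathrm{Aut}(\Lambda)$, $\mathscr{M}$ a submonoid of $\mathrm{Aut}(\Lambda)$ with $(\mathscr{M}\mathscr{M}^{-1})\cap W=\{1\}$ and $W$ normalizing $\mathscr{M}$; $\hat W_i=W_i\ltimes\mathscr{M}_i$. $\Lambda_1\otimes\Lambda_2$ is assumed to be an integral domain, and $(w_1,w_2)(a\otimes b)=w_1(a)\otimes w_2(b)$. *)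

From HB Require Import structures.
From mathcomp Require Import all_boot all_order all_algebra.
From mathcomp Require Import fraction.
Set Implicit Arguments. Unset Strict Implicit. Unset Printing Implicit Defensive.
Import GRing.Theory.
Local Open Scope ring_scope.

Definition feq (T U : Type) (f g : T -> U) : Prop := forall x, f x = g x.

Definition is_ideal (R : comNzRingType) (I : R -> Prop) : Prop :=
  I 0 /\ (forall x y, I x -> I y -> I (x + y)) /\ (forall r x, I x -> I (r * x)).

Definition noetherian (R : comNzRingType) : Prop :=
  forall I : nat -> R -> Prop,
    (forall n, is_ideal (I n)) ->
    (forall n x, I n x -> I n.+1 x) ->
    exists N, forall n x, (N <= n)%N -> I n x -> I N x.

Definition integrally_closed (R : idomainType) : Prop :=
  forall x : {fraction R},
    (exists p : {poly R}, p \is monic /\ root (map_poly (@FracField.tofrac R) p) x) ->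
    exists a : R, x = FracField.tofrac a.

(* K-algebra automorphisms of L, where the K-algebra structure is f : K -> L *)
Definition kaut (K : fieldType) (L : comNzRingType) (f : {rmorphism K -> L})
    (s : L -> L) : Prop :=
  (forall x y, s (x + y) = s x + s y) /\ (forall x y, s (x * y) = s x * s y) /\
  s 1 = 1 /\ bijective s /\ (forall k, s (f k) = f k).

(* flag order data (L, W, M) over K; W and M are given as sets of maps L -> L
   (considered up to extensional equality) *)
Definition flag_order_data (K : fieldType) (L : idomainType) (f : {rmorphism K -> L})
    (W M : (L -> L) -> Prop) : Prop :=
  [/\ noetherian L /\ integrally_closed L,
      (* W is a finite subgroup of Aut_K(L) *)
      [/\ (forall w, W w -> kaut f w),
          W id,
          (forall w w', W w -> W w' -> W (w \o w')),
          (forall w, W w -> exists2 w', W w' & (feq (w \o w') id /\ feq (w' \o w) id)) &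
          (exists (N : nat) (s : nat -> L -> L), forall w, W w -> exists2 k, (k < N)%N & feq w (s k))],
      [/\ (forall m, M m -> kaut f m), M id & (forall m m', M m -> M m' -> M (m \o m'))],
      (* (M M^-1) \cap W = {1} *)
      (forall m m' w, M m -> M m' -> W w -> feq m (w \o m') -> feq w id) &
      (forall w m, W w -> M m -> exists2 m', M m' & feq (w \o m) (m' \o w))].

(* (T, i1, i2) is the tensor product T = L1 \otimes_K L2 of the commutative
   K-algebras L1, L2: the coproduct in commutative K-algebras, i.e. the universal
   property of the tensor product of commutative K-algebras. *)
Definition is_tensor_product (K : fieldType) (L1 L2 : comNzRingType)
    (f1 : {rmorphism K -> L1}) (f2 : {rmorphism K -> L2})
    (T : comNzRingType) (i1 : {rmorphism L1 -> T}) (i2 : {rmorphism L2 -> T}) : Prop :=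
  (forall k, i1 (f1 k) = i2 (f2 k)) /\
  forall (B : comNzRingType) (h1 : {rmorphism L1 -> B}) (h2 : {rmorphism L2 -> B}),
    (forall k, h1 (f1 k) = h2 (f2 k)) ->
    (exists h : {rmorphism T -> B}, feq (h \o i1) h1 /\ feq (h \o i2) h2) /\
    (forall h h' : {rmorphism T -> B},
        feq (h \o i1) h1 -> feq (h \o i2) h2 ->
        feq (h' \o i1) h1 -> feq (h' \o i2) h2 -> feq h h').

From HB Require Import structures.
From mathcomp Require Import all_boot all_order all_algebra.
From mathcomp Require Import generic_quotient.
From mathcomp Require Import boolp classical_sets.
From mathcomp Require Import ring.
Set Implicit Arguments. Unset Strict Implicit. Unset Printing Implicit Defensive.
Import GRing.Theory.
Local Open Scope ring_scope.

(* On simple tensors, sigma_i acts by the character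
   chi_i (b, c) = sigma_i (b (x) c) of the multiplicative monoid L1 * L2 with values
   in the domain L. Distinct characters are linearly independent (Dedekind), and
   linearly independent functions F_1, ..., F_n admit points p_1, ..., p_n with
   det (F_i (p_j)) <> 0 (expand along a column and induct).
   The chi_i are pairwise distinct because factorisations w m in W x| M are unique
   and because L1 and L2 embed in L1 (x) L2. For the embedding, compare with a model
   of the tensor product in which a (x) 1 contracts to a against a K-linear
   functional phi : L2 -> K with phi 1 = 1; such a phi exists by Zorn's lemma. *)

Section UnitalFunctional.
Variables (K : fieldType) (C : comNzRingType) (g : {rmorphism K -> C}).

Definition klinear (phi : C -> K) : Prop :=
  (forall x y, phi (x + y) = phi x + phi y) /\ (forall k x, phi (g k * x) = k * phi x).

Definition subspace_avoiding1 (V : C -> Prop) : Prop :=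
  [/\ forall x y, V x -> V y -> V (x + y), forall k x, V x -> V (g k * x) & ~ V 1].

Lemma exists_maximal_subspace_avoiding1 : exists V,
  subspace_avoiding1 V /\ forall B, (V `<` B)%classic -> ~ subspace_avoiding1 B.
Proof.
apply: Zorn_bigcup => F FP Ftot; split.
- move=> x y [X FX Xx] [Y FY Yy].
  have [XY|YX] := Ftot X Y FX FY.
  + by exists Y => //; case: (FP Y FY) => + _ _; apply => //; exact: XY.
  + by exists X => //; case: (FP X FX) => + _ _; apply => //; exact: YX.
- by move=> k x [X FX Xx]; exists X => //; case: (FP X FX) => _ + _; apply.
- by move=> [X FX X1]; case: (FP X FX) => _ _; apply.
Qed.

Section MaximalSubspace.
Context {V : C -> Prop}.
Hypothesis V_subspace : subspace_avoiding1 V.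
Hypothesis V_max : forall B, (V `<` B)%classic -> ~ subspace_avoiding1 B.

Lemma maximal_subspace0 : V 0.
Proof.
case: V_subspace => VD VZ V1; apply: contrapT => nV0.
apply: (V_max (B := fun y => V y \/ y = 0)).
  by split=> [y|/(_ 0 (or_intror erefl))]; [left|].
split.
- move=> x y [Vx|->] [Vy|->]; rewrite ?addr0 ?add0r;
  by [left; apply: VD|left|left|right].
- by move=> k x [Vx|->]; [left; apply: VZ|right; rewrite mulr0].
- by case=> [//|/eqP]; rewrite oner_eq0.
Qed.

Lemma subspace_coset_uniq k k' x : V (x - g k) -> V (x - g k') -> k = k'.
Proof.
case: V_subspace => VD VZ V1 Vk Vk'; apply: contrapT => /eqP; rewrite -subr_eq0 => nz.
apply: V1; have <- : g (k - k')^-1 * ((x - g k') - (x - g k)) = 1.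
  by rewrite opprB [_ + (_ - x)]addrC addrA subrK -rmorphB -rmorphM mulVf ?rmorph1.
apply: (VZ) (VD _ _ Vk' _); rewrite -mulN1r -(rmorphN1 g); exact: VZ.
Qed.

Lemma maximal_subspace_coset x : exists k, V (x - g k).
Proof.
case: V_subspace => VD VZ V1; apply: contrapT => nex.
have nVx : ~ V x by move=> Vx; apply: nex; exists 0; rewrite rmorph0 subr0.
pose B y := exists c v, V v /\ y = v + g c * x.
apply: (V_max (B := B)); first split.
- by move=> y Vy; exists 0, y; rewrite rmorph0 mul0r addr0.
- move=> BV; apply: nVx; apply: BV; exists 1, 0.
  by split; [exact: maximal_subspace0|rewrite rmorph1 mul1r add0r].
split.
- move=> _ _ [c [v [Vv ->]]] [c' [v' [Vv' ->]]].
  exists (c + c'), (v + v'); split; first exact: VD.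
  by rewrite rmorphD mulrDl addrACA.
- move=> k _ [c [v [Vv ->]]]; exists (k * c), (g k * v).
  by split; [exact: VZ|rewrite mulrDr rmorphM mulrA].
- move=> [c [v [Vv e]]]; have [c0|cn0] := eqVneq c 0.
    by apply: V1; rewrite e c0 rmorph0 mul0r addr0.
  (* [1 = v + c x] shows that [x] lies in the coset [c^-1 + V] *)
  apply: nex; exists c^-1.
  have -> : x - g c^-1 = g (- c^-1) * v.
    have : g c^-1 * 1 = g c^-1 * v + g c^-1 * g c * x by rewrite e mulrDr mulrA.
    rewrite -rmorphM mulVf // rmorph1 mul1r mulr1 => ->.
    by rewrite rmorphN mulNr opprD addrCA subrr addr0.
  exact: VZ.
Qed.

End MaximalSubspace.

Lemma exists_unital_klinear : exists phi, klinear phi /\ phi 1 = 1.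
Proof.
have [V [V_subspace V_max]] := exists_maximal_subspace_avoiding1.
have [VD VZ _] := V_subspace.
have uniq := subspace_coset_uniq V_subspace.
pose phi x := projT1 (cid (maximal_subspace_coset V_subspace V_max x)).
have phiP x : V (x - g (phi x)) by rewrite /phi; case: cid.
exists phi; split; first split.
- move=> x y; apply: (uniq _ _ (x + y)) => //.
  by rewrite rmorphD opprD addrACA; apply: VD.
- by move=> k x; apply: (uniq _ _ (g k * x)) => //; rewrite rmorphM -mulrBr; apply: VZ.
- apply: (uniq _ _ 1) => //; rewrite rmorph1 subrr.
  exact: (maximal_subspace0 V_subspace V_max).
Qed.

End UnitalFunctional.

Section TensorProduct.
Local Open Scope quotient_scope.
Variables (K : fieldType) (A C : comNzRingType).
Variables (f : {rmorphism K -> A}) (g : {rmorphism K -> C}).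

Definition contract (phi : C -> K) (u : seq (A * C)) : A :=
  \sum_(p <- u) p.1 * f (phi p.2).

Definition tensor_equiv (u v : seq (A * C)) : bool :=
  `[< forall phi, klinear g phi -> contract phi u = contract phi v >].

Lemma tensor_equivP u v :
  reflect (forall phi, klinear g phi -> contract phi u = contract phi v) (tensor_equiv u v).
Proof. exact: asboolP. Qed.

Lemma tensor_equiv_refl : reflexive tensor_equiv.
Proof. by move=> u; apply/tensor_equivP. Qed.

Lemma tensor_equiv_sym : symmetric tensor_equiv.
Proof. by move=> u v; apply/tensor_equivP/tensor_equivP => e phi /e. Qed.

Lemma tensor_equiv_trans : transitive tensor_equiv.
Proof.
by move=> v u w /tensor_equivP e1 /tensor_equivP e2; apply/tensor_equivP => phi lin;
  rewrite e1 // e2.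
Qed.

Canonical tensor_equiv_equiv :=
  EquivRel tensor_equiv tensor_equiv_refl tensor_equiv_sym tensor_equiv_trans.

(* Formal sums [\sum_k a_k (x) c_k] modulo the common kernel of the contractions
   [id (x) phi]. *)
Definition tensor := {eq_quot tensor_equiv}.
HB.instance Definition _ := Choice.on tensor.

Lemma eq_tensor_pi u v :
  (forall phi, klinear g phi -> contract phi u = contract phi v) ->
  \pi_tensor u = \pi_tensor v.
Proof. by move=> e; apply/eqmodP/tensor_equivP. Qed.

Lemma contract_repr u phi :
  klinear g phi -> contract phi (repr (\pi_tensor u)) = contract phi u.
Proof.
move=> lin; have /tensor_equivP/(_ phi lin) // : tensor_equiv (repr (\pi_tensor u)) u.
by apply/eqmodP; rewrite reprK.
Qed.

Definition fsum_opp (u : seq (A * C)) := [seq (- p.1, p.2) | p <- u].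
Definition fsum_mul (u v : seq (A * C)) := [seq (p.1 * q.1, p.2 * q.2) | p <- u, q <- v].

Lemma contract_cat phi u v : contract phi (u ++ v) = contract phi u + contract phi v.
Proof. by rewrite /contract big_cat. Qed.

Lemma contract_opp phi u : contract phi (fsum_opp u) = - contract phi u.
Proof. by rewrite /contract big_map -sumrN; apply: eq_bigr => p _; rewrite mulNr. Qed.

Lemma contract_mul phi u v : contract phi (fsum_mul u v) =
  \sum_(p <- u) \sum_(q <- v) p.1 * q.1 * f (phi (p.2 * q.2)).
Proof. by rewrite /contract big_allpairs_dep. Qed.

Lemma contract1 phi a c : contract phi [:: (a, c)] = a * f (phi c).
Proof. by rewrite /contract big_seq1. Qed.

Lemma klinear_mulr phi y : klinear g phi -> klinear g (fun x => phi (x * y)).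
Proof. by move=> [phiD phiZ]; split=> [x z|k x]; rewrite ?mulrDl ?phiD // -mulrA phiZ. Qed.

Lemma klinear_mull phi y : klinear g phi -> klinear g (fun x => phi (y * x)).
Proof. by move=> [phiD phiZ]; split=> [x z|k x]; rewrite ?mulrDr ?phiD // mulrCA phiZ. Qed.

Lemma contract_mul_compat u u' v v' :
  (forall phi, klinear g phi -> contract phi u = contract phi u') ->
  (forall phi, klinear g phi -> contract phi v = contract phi v') ->
  forall phi, klinear g phi -> contract phi (fsum_mul u v) = contract phi (fsum_mul u' v').
Proof.
have mulE phi w w' : contract phi (fsum_mul w w') =
    \sum_(q <- w') q.1 * contract (fun x => phi (x * q.2)) w.
  rewrite contract_mul exchange_big; apply: eq_bigr => q _.
  by rewrite /contract mulr_sumr; apply: eq_bigr => p _; rewrite mulrCA mulrA.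
have mulE' phi w w' : contract phi (fsum_mul w w') =
    \sum_(p <- w) p.1 * contract (fun x => phi (p.2 * x)) w'.
  rewrite contract_mul; apply: eq_bigr => p _.
  by rewrite /contract mulr_sumr; apply: eq_bigr => q _; rewrite mulrA.
move=> eu ev phi lin; rewrite mulE.
transitivity (\sum_(q <- v) q.1 * contract (fun x => phi (x * q.2)) u').
  by apply: eq_bigr => q _; rewrite eu //; apply: klinear_mulr.
by rewrite -mulE !mulE'; apply: eq_bigr => p _; rewrite ev //; apply: klinear_mull.
Qed.

Definition tensor_add := lift_op2 tensor cat.
Lemma pi_tensor_add : {morph \pi_tensor : u v / u ++ v >-> tensor_add u v}.
Proof.
by move=> u v; unlock tensor_add; apply: eq_tensor_pi => phi lin;
  rewrite !contract_cat !contract_repr.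
Qed.
Canonical pi_tensor_add_morph := PiMorph2 pi_tensor_add.

Definition tensor_opp := lift_op1 tensor fsum_opp.
Lemma pi_tensor_opp : {morph \pi_tensor : u / fsum_opp u >-> tensor_opp u}.
Proof.
by move=> u; unlock tensor_opp; apply: eq_tensor_pi => phi lin;
  rewrite !contract_opp !contract_repr.
Qed.
Canonical pi_tensor_opp_morph := PiMorph1 pi_tensor_opp.

Definition tensor_mul := lift_op2 tensor fsum_mul.
Lemma pi_tensor_mul : {morph \pi_tensor : u v / fsum_mul u v >-> tensor_mul u v}.
Proof.
move=> u v; unlock tensor_mul; apply: eq_tensor_pi.
by apply: contract_mul_compat => phi lin; rewrite contract_repr.
Qed.
Canonical pi_tensor_mul_morph := PiMorph2 pi_tensor_mul.

Definition tensor_zero := lift_cst tensor [::].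
Canonical pi_tensor_zero_morph := PiConst tensor_zero.
Definition tensor_one := lift_cst tensor [:: (1, 1)].
Canonical pi_tensor_one_morph := PiConst tensor_one.

Lemma tensor_addA : associative tensor_add.
Proof. by elim/quotW=> u; elim/quotW=> v; elim/quotW=> w; rewrite !piE catA. Qed.

Lemma tensor_addC : commutative tensor_add.
Proof.
elim/quotW=> u; elim/quotW=> v; rewrite !piE; apply: eq_tensor_pi => phi _.
by rewrite !contract_cat addrC.
Qed.

Lemma tensor_add0 : left_id tensor_zero tensor_add.
Proof. by elim/quotW=> u; rewrite !piE. Qed.

Lemma tensor_addN : left_inverse tensor_zero tensor_opp tensor_add.
Proof.
elim/quotW=> u; rewrite !piE; apply: eq_tensor_pi => phi _.
by rewrite contract_cat contract_opp addNr /contract big_nil.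
Qed.

HB.instance Definition _ :=
  GRing.isZmodule.Build tensor tensor_addA tensor_addC tensor_add0 tensor_addN.

Lemma tensor_mulA : associative tensor_mul.
Proof.
elim/quotW=> u; elim/quotW=> v; elim/quotW=> w; rewrite !piE; apply: eq_tensor_pi => phi _.
rewrite !contract_mul /fsum_mul !big_allpairs_dep /=.
apply: eq_bigr => p _; rewrite big_allpairs_dep.
by apply: eq_bigr => q _; apply: eq_bigr => r _; rewrite !mulrA.
Qed.

Lemma tensor_mulC : commutative tensor_mul.
Proof.
elim/quotW=> u; elim/quotW=> v; rewrite !piE; apply: eq_tensor_pi => phi _.
rewrite !contract_mul exchange_big; apply: eq_bigr => p _; apply: eq_bigr => q _.
by rewrite [q.1 * _]mulrC [q.2 * _]mulrC.
Qed.

Lemma tensor_mul1 : left_id tensor_one tensor_mul.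
Proof.
elim/quotW=> u; rewrite !piE; apply: eq_tensor_pi => phi _.
by rewrite contract_mul big_seq1 /contract; apply: eq_bigr => q _; rewrite !mul1r.
Qed.

Lemma tensor_mulDl : left_distributive tensor_mul tensor_add.
Proof.
elim/quotW=> u; elim/quotW=> v; elim/quotW=> w; rewrite !piE; apply: eq_tensor_pi => phi _.
by rewrite !(contract_mul, contract_cat) big_cat.
Qed.

Lemma tensor_one_neq0 : tensor_one != tensor_zero.
Proof.
have [phi [lin phi1]] := exists_unital_klinear g.
rewrite !piE; apply/negP => /tensor_equivP/(_ phi lin).
by rewrite contract1 phi1 rmorph1 mulr1 /contract big_nil => /eqP; rewrite oner_eq0.
Qed.

HB.instance Definition _ := GRing.Zmodule_isComNzRing.Build tensor
  tensor_mulA tensor_mulC tensor_mul1 tensor_mulDl tensor_one_neq0.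

Definition simple_tensor (a : A) (c : C) : tensor := \pi_tensor [:: (a, c)].

Lemma pi_tensorB u v :
  (\pi_tensor u : tensor) - (\pi_tensor v : tensor) = \pi_tensor (u ++ fsum_opp v).
Proof.
change (tensor_add (\pi_tensor u) (tensor_opp (\pi_tensor v)) = \pi_tensor (u ++ fsum_opp v)).
by rewrite !piE.
Qed.

Lemma pi_tensorM u v :
  (\pi_tensor u : tensor) * (\pi_tensor v : tensor) = \pi_tensor (fsum_mul u v).
Proof.
by change (tensor_mul (\pi_tensor u) (\pi_tensor v) = \pi_tensor (fsum_mul u v)); rewrite !piE.
Qed.

Lemma simple_tensorBl a a' c :
  simple_tensor (a - a') c = simple_tensor a c - simple_tensor a' c.
Proof.
rewrite pi_tensorB; apply: eq_tensor_pi => phi _.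
by rewrite contract_cat contract_opp !contract1 mulrBl.
Qed.

Lemma simple_tensorBr a c c' :
  simple_tensor a (c - c') = simple_tensor a c - simple_tensor a c'.
Proof.
rewrite pi_tensorB; apply: eq_tensor_pi => phi [phiD phiZ].
rewrite contract_cat contract_opp !contract1 phiD -mulN1r -(rmorphN1 g) phiZ.
by rewrite mulN1r rmorphB mulrBr.
Qed.

Lemma simple_tensorM a a' c c' :
  simple_tensor a c * simple_tensor a' c' = simple_tensor (a * a') (c * c').
Proof. by rewrite pi_tensorM /fsum_mul. Qed.

Lemma simple_tensor11 : simple_tensor 1 1 = 1.
Proof. by change (simple_tensor 1 1 = tensor_one); rewrite /simple_tensor !piE. Qed.

Lemma simple_tensor_scale k : simple_tensor (f k) 1 = simple_tensor 1 (g k).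
Proof.
apply: eq_tensor_pi => phi [_ phiZ].
by rewrite !contract1 -[g k]mulr1 phiZ rmorphM mul1r.
Qed.

Definition tensor_l (a : A) : tensor := simple_tensor a 1.
Definition tensor_r (c : C) : tensor := simple_tensor 1 c.

Lemma tensor_l_is_monoid_morphism : monoid_morphism tensor_l.
Proof. by split=> [|a a']; rewrite /tensor_l ?simple_tensor11 ?simple_tensorM ?mulr1. Qed.

Lemma tensor_r_is_monoid_morphism : monoid_morphism tensor_r.
Proof. by split=> [|c c']; rewrite /tensor_r ?simple_tensor11 ?simple_tensorM ?mulr1. Qed.

HB.instance Definition _ :=
  GRing.isZmodMorphism.Build A tensor tensor_l (fun a a' => simple_tensorBl a a' 1).
HB.instance Definition _ :=
  GRing.isMonoidMorphism.Build A tensor tensor_l tensor_l_is_monoid_morphism.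
HB.instance Definition _ :=
  GRing.isZmodMorphism.Build C tensor tensor_r (simple_tensorBr 1).
HB.instance Definition _ :=
  GRing.isMonoidMorphism.Build C tensor tensor_r tensor_r_is_monoid_morphism.

Lemma tensor_l_inj : injective tensor_l.
Proof.
apply: raddf_inj => a /eqP; have [phi [lin phi1]] := exists_unital_klinear g.
change (tensor_l a == tensor_zero -> a = 0); rewrite /tensor_l /simple_tensor !piE.
move=> /tensor_equivP/(_ phi lin).
by rewrite contract1 phi1 rmorph1 mulr1 /contract big_nil.
Qed.

End TensorProduct.

Lemma is_tensor_productC (K : fieldType) (L1 L2 : comNzRingType)
    (f1 : {rmorphism K -> L1}) (f2 : {rmorphism K -> L2})
    (T : comNzRingType) (i1 : {rmorphism L1 -> T}) (i2 : {rmorphism L2 -> T}) :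
  is_tensor_product f1 f2 i1 i2 -> is_tensor_product f2 f1 i2 i1.
Proof.
move=> [i12 univ]; split=> [k|B h2 h1 h21]; first by rewrite i12.
have [[h [hi2 hi1]] uniq] := univ B h1 h2 (fun k => esym (h21 k)).
by split=> [|h' h'' ? ? ? ?]; [exists h | apply: uniq].
Qed.

Lemma is_tensor_product_inj_l (K : fieldType) (L1 L2 : comNzRingType)
    (f1 : {rmorphism K -> L1}) (f2 : {rmorphism K -> L2})
    (T : comNzRingType) (i1 : {rmorphism L1 -> T}) (i2 : {rmorphism L2 -> T}) :
  is_tensor_product f1 f2 i1 i2 -> injective i1.
Proof.
case=> _ /(_ _ (tensor_l f1 f2) (tensor_r f1 f2) (@simple_tensor_scale _ _ _ f1 f2)).
move=> [[h [hi1 _]] _]; exact: inj_compr (eq_inj (@tensor_l_inj _ _ _ f1 f2) (fsym hi1)).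
Qed.

Lemma is_tensor_product_inj_r (K : fieldType) (L1 L2 : comNzRingType)
    (f1 : {rmorphism K -> L1}) (f2 : {rmorphism K -> L2})
    (T : comNzRingType) (i1 : {rmorphism L1 -> T}) (i2 : {rmorphism L2 -> T}) :
  is_tensor_product f1 f2 i1 i2 -> injective i2.
Proof. by move/is_tensor_productC/is_tensor_product_inj_l. Qed.

Section Characters.
Variables (G : Type) (R : idomainType).

Definition free_funs n (F : 'I_n -> G -> R) : Prop :=
  forall c : 'I_n -> R, (forall x, \sum_i c i * F i x = 0) -> forall i, c i = 0.

Lemma free_funs_lift0 n (F : 'I_n.+1 -> G -> R) :
  free_funs F -> free_funs (fun i => F (lift ord0 i)).
Proof.
move=> freeF c sum0 i.
pose c' j := if unlift ord0 j is Some j' then c j' else 0.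
have := freeF c' _ (lift ord0 i); rewrite /c' liftK; apply=> x.
rewrite big_ord_recl unlift_none mul0r add0r -[RHS](sum0 x).
by apply: eq_bigr => j _; rewrite liftK.
Qed.

Lemma free_funs_det n (F : 'I_n -> G -> R) :
  free_funs F -> exists p : 'I_n -> G, \det (\matrix_(i, j) F i (p j)) != 0.
Proof.
elim: n F => [|n IH] F freeF.
  by exists (ffun0 (card_ord 0)); rewrite det_mx00 oner_eq0.
have [x0 _] : exists x : G, True.
  apply: contrapT => noG; move: (oner_neq0 R); rewrite (freeF (fun=> 1) _ ord0) ?eqxx //.
  by move=> x; case: noG; exists x.
have [p' det_p'] := IH _ (free_funs_lift0 freeF).
pose p x j := if unlift ord0 j is Some j' then p' j' else x.
pose M x := \matrix_(i, j) F i (p x j).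
have minorE x : col' ord0 (M x) = col' ord0 (M x0).
  by apply/matrixP => i j; rewrite !mxE /p liftK.
have detE x : \det (M x) = \sum_i cofactor (M x0) i ord0 * F i x.
  rewrite (expand_det_col _ ord0); apply: eq_bigr => i _.
  by rewrite /cofactor minorE mxE /p unlift_none mulrC.
have cof0 : cofactor (M x0) ord0 ord0 != 0.
  rewrite /cofactor expr0 mul1r.
  suff -> : row' ord0 (col' ord0 (M x0)) = \matrix_(i, j) F (lift ord0 i) (p' j) by [].
  by apply/matrixP => i j; rewrite !mxE /p liftK.
apply: contrapT => no_p; move/eqP: cof0; apply.
apply: (freeF (fun i => cofactor (M x0) i ord0)) => x.
by rewrite -detE; apply: contrapT => det_x; apply: no_p; exists (p x); apply/eqP.
Qed.

Lemma characters_free (mul : G -> G -> G) (one : G) n (chi : 'I_n -> G -> R) :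
  (forall i x y, chi i (mul x y) = chi i x * chi i y) -> (forall i, chi i one = 1) ->
  (forall i j, i != j -> exists x, chi i x != chi j x) -> free_funs chi.
Proof.
elim: n chi => [|n IH] chi chiM chi1 chi_neq c sum0 i; first by case: i.
pose chi' j := chi (lift ord0 j).
have chi'_neq a b : a != b -> exists x, chi' a x != chi' b x.
  by move=> ab; apply: chi_neq; rewrite (inj_eq lift_inj).
have c_lift j : c (lift ord0 j) = 0.
  have [y] := chi_neq _ _ (neq_lift ord0 j); rewrite eq_sym => chi_y.
  (* the relation [sum_i c_i (chi_i y - chi_0 y) chi_i = 0] no longer involves [chi_0] *)
  suff /eqP : c (lift ord0 j) * (chi' j y - chi ord0 y) = 0.
    by rewrite mulf_eq0 subr_eq0 (negbTE chi_y) orbF => /eqP.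
  apply: (IH chi' (fun _ => chiM _) (fun _ => chi1 _) chi'_neq
    (fun k => c (lift ord0 k) * (chi' k y - chi ord0 y))).
  move=> x; transitivity (\sum_i c i * chi i (mul y x) - chi ord0 y * \sum_i c i * chi i x).
    rewrite mulr_sumr -sumrB big_ord_recl chiM mulrCA subrr add0r.
    by apply: eq_bigr => k _; rewrite /chi' chiM; ring.
  by rewrite !sum0 mulr0 subr0.
case: (unliftP ord0 i) => [j ->|->]; first exact: c_lift.
have := sum0 one; rewrite big_ord_recl big1 => [|k _]; last by rewrite c_lift mul0r.
by rewrite chi1 mulr1 addr0.
Qed.

End Characters.

Lemma monoid_morphism_pair_mul (A B : pzSemiRingType) (R : comPzSemiRingType)
    (s : A -> R) (t : B -> R) :
  monoid_morphism s -> monoid_morphism t ->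
  monoid_morphism (fun x : A * B => s x.1 * t x.2).
Proof.
by move=> [s1 sM] [t1 tM]; split=> [|x y]; rewrite /= ?s1 ?t1 ?mulr1 // sM tM mulrACA.
Qed.

Lemma pair_mul_eq (A B R : pzSemiRingType) (s s' : A -> R) (t t' : B -> R) :
  s 1 = 1 -> s' 1 = 1 -> t 1 = 1 -> t' 1 = 1 ->
  (forall a b, s a * t b = s' a * t' b) -> s =1 s' /\ t =1 t'.
Proof.
move=> s1 s'1 t1 t'1 e; split=> [a|b].
  by have := e a 1; rewrite t1 t'1 !mulr1.
by have := e 1 b; rewrite s1 s'1 !mul1r.
Qed.

Section FlagOrderData.
Variables (K : fieldType) (L : idomainType) (f : {rmorphism K -> L}).
Variables (W M : (L -> L) -> Prop).
Hypothesis hD : flag_order_data f W M.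

Lemma flag_order_factor_uniq w m w' m' :
  W w -> M m -> W w' -> M m' -> w \o m =1 w' \o m' -> w =1 w' /\ m =1 m'.
Proof.
case: hD => _ [_ _ Wcomp Winv _] _ MW1 _ Ww Mm Ww' Mm' e.
have [v Wv [w'v vw']] := Winv w' Ww'.
have m'E : m' =1 (v \o w) \o m.
  by move=> x /=; have /= -> := e x; exact: esym (vw' _).
have vw1 : v \o w =1 id := MW1 m' m _ Mm' Mm (Wcomp _ _ Wv Ww) m'E.
split=> [x|x]; last by rewrite m'E; exact: esym (vw1 _).
transitivity (w' (v (w x))); first exact: esym (w'v _).
by have /= -> := vw1 x.
Qed.

Lemma flag_action_monoid_morphism (R : pzSemiRingType) (i : {rmorphism L -> R}) w m :
  W w -> M m -> monoid_morphism (i \o (w \o m)).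
Proof.
case: hD => _ [Waut _ _ _ _] [Maut _ _] _ _ Ww Mm.
have [_ [wM [w1 _]]] := Waut w Ww; have [_ [mM [m1 _]]] := Maut m Mm.
by split=> [|x y]; rewrite /= ?m1 ?w1 ?rmorph1 // mM wM rmorphM.
Qed.

End FlagOrderData.

Theorem mainTheorem6
  (K : fieldType)
  (L1 L2 : idomainType) (f1 : {rmorphism K -> L1}) (f2 : {rmorphism K -> L2})
  (W1 M1 : (L1 -> L1) -> Prop) (W2 M2 : (L2 -> L2) -> Prop)
  (hD1 : flag_order_data f1 W1 M1) (hD2 : flag_order_data f2 W2 M2)
  (L : idomainType) (i1 : {rmorphism L1 -> L}) (i2 : {rmorphism L2 -> L})
  (hT : is_tensor_product f1 f2 i1 i2)
  (n : nat)
  (* sigma_i = ((w1 i, m1 i), (w2 i, m2 i)) in (W1 x| M1) x (W2 x| M2) *)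
  (w1 m1 : 'I_n -> L1 -> L1) (w2 m2 : 'I_n -> L2 -> L2)
  (hw1 : forall i, W1 (w1 i)) (hm1 : forall i, M1 (m1 i))
  (hw2 : forall i, W2 (w2 i)) (hm2 : forall i, M2 (m2 i))
  (hdist : forall i j : 'I_n, i != j ->
     ~ (feq (w1 i) (w1 j) /\ feq (m1 i) (m1 j) /\ feq (w2 i) (w2 j) /\ feq (m2 i) (m2 j))) :
  (* a_j = b_j (x) c_j = i1 b_j * i2 c_j, and sigma_i (b (x) c) = w1(m1 b) (x) w2(m2 c) *)
  exists (b : 'I_n -> L1) (c : 'I_n -> L2),
    \det (\matrix_(i < n, j < n) (i1 (w1 i (m1 i (b j))) * i2 (w2 i (m2 i (c j))))) != 0.
Proof.
pose s i := i1 \o (w1 i \o m1 i); pose t i := i2 \o (w2 i \o m2 i).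
have sM i : monoid_morphism (s i) := flag_action_monoid_morphism hD1 i1 (hw1 i) (hm1 i).
have tM i : monoid_morphism (t i) := flag_action_monoid_morphism hD2 i2 (hw2 i) (hm2 i).
pose chi i (x : L1 * L2) := s i x.1 * t i x.2.
have chiM i : monoid_morphism (chi i) := monoid_morphism_pair_mul (sM i) (tM i).
have chi_neq i j : i != j -> exists x, chi i x != chi j x.
  move=> ij; apply: contrapT => no_x; apply: (hdist i j ij).
  have chi_eq x : chi i x = chi j x.
    by apply/eqP; apply: contrapT => ne; apply: no_x; exists x; apply/negP.
  have [/= e1 e2] := pair_mul_eq (sM i).1 (sM j).1 (tM i).1 (tM j).1
    (fun a b => chi_eq (a, b)).
  have [ew1 em1] := flag_order_factor_uniq hD1 (hw1 i) (hm1 i) (hw1 j) (hm1 j)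
    (fun a => is_tensor_product_inj_l hT (e1 a)).
  have [ew2 em2] := flag_order_factor_uniq hD2 (hw2 i) (hm2 i) (hw2 j) (hm2 j)
    (fun c => is_tensor_product_inj_r hT (e2 c)).
  by [].
have chi_free := characters_free (fun i => (chiM i).2) (fun i => (chiM i).1) chi_neq.
have [p det_p] := free_funs_det chi_free.
by exists (fun j => (p j).1), (fun j => (p j).2).
Qed.
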